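(* Let $a\geq 3$ be an integer. There is a bijective correspondence between pyramids of size $m\geq 1$ (with bottom piece covering $]0,a[$) and finite sequences $(p_1,p_2,\dots,p_r)$, $r\geq 1$, of pyramids together with integers $s_1,\dots,s_r$ such that $p_i$ is a right $s_i$-pyramid if $i$ is odd and a left $s_i$-pyramid if $i$ is even, $|p_1|+\dots+|p_r|=m$, $s_1=0$, and $$1\leq s_{i+1}-s_i\leq a-1 \text{ if } i \text{ is odd},\qquad 1\leq s_i-s_{i+1}\leq a-1 \text{ if } i \text{ is even}.$$
   Context: A piece is an open interval $]s,s+a[$ of the real line with $s\in\mathbb Z$; two pieces are concurrent iff their intervals intersect. A heap (in the sense of Viennot) is a finite configuration obtained by successively dropping pieces vertically towards the horizontal axis: each dropped piece comes to rest on the axis or on top of the highest previously placed piece whose interval intersects its own; configurations (not dropping orders) are what is counted. A heap is a pyramid if it has a unique bottom (minimal) piece, i.e. exactly one piece rests on the axis. The size $|p|$ is the number of pieces. A pyramid $p$ is a right $s$-pyramid if its bottom piece covers $]s,s+a[$ and is a leftmost piece of $p$ (no piece of $p$ covers $]t,t+a[$ with $t<s$); it is a left $s$-pyramid if its bottom piece covers $]s-a,s[$ and is a rightmost piece of $p$ (no piece of $p$ covers $]t-a,t[$ with $t>s$). *)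

From HB Require Import structures.
From mathcomp Require Import all_boot all_order all_algebra.
From mathcomp Require Import finmap.
Set Implicit Arguments. Unset Strict Implicit. Unset Printing Implicit Defensive.
Import Order.TTheory GRing.Theory Num.Theory.
Local Open Scope fset_scope.
Local Open Scope ring_scope.

(* A placed piece is a pair (s, h) : the piece covering ]s, s+a[ resting at
   level h (h = 0 : on the horizontal axis). A configuration is a finite set
   of placed pieces. *)
Definition piece := (int * nat)%type.
Definition config := {fset piece}.

(* ]s,s+a[ and ]t,t+a[ intersect iff |s - t| < a. *)
Definition concurrent (a : nat) (s t : int) : bool := `|s - t| < a%:Z.

Definition rest_level (a : nat) (c : config) (s : int) : nat :=
  (\max_(x <- enum_fset c | concurrent a x.1 s) x.2.+1)%N.

(* heap obtained by dropping the pieces of l, the LAST dropped piece being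
   the head of l *)
Fixpoint heap_of (a : nat) (l : seq int) : config :=
  match l with
  | [::] => fset0
  | s :: l' => (s, rest_level a (heap_of a l') s) |` heap_of a l'
  end.

Definition is_heap (a : nat) (H : config) : Prop := exists l, H = heap_of a l.

Definition hsize (H : config) : nat := #|` H|.

(* minimal pieces = pieces lying on the axis *)
Definition bottom_pieces (H : config) : config := [fset x in H | x.2 == 0%N].

Definition is_pyramid (a : nat) (H : config) : Prop :=
  is_heap a H /\ #|` bottom_pieces H| = 1%N.

Definition right_pyramid (a : nat) (s : int) (H : config) : Prop :=
  [/\ is_pyramid a H, (s, 0%N) \in H & forall x, x \in H -> s <= x.1].

(* left s-pyramid: bottom covers ]s-a,s[ and is a rightmost piece *)
Definition left_pyramid (a : nat) (s : int) (H : config) : Prop :=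
  [/\ is_pyramid a H, (s - a%:Z, 0%N) \in H & forall x, x \in H -> x.1 <= s - a%:Z].

Definition pyramid0 (a m : nat) (H : config) : Prop :=
  [/\ is_pyramid a H, (0, 0%N) \in H & hsize H = m].

Definition dflt : config * int := (fset0, 0).

(* sequences ((p_1,s_1),...,(p_r,s_r)); index i below is 0-based, so the
   paper's index i+1 is odd iff i is even *)
Definition good_seq (a m : nat) (q : seq (config * int)) : Prop :=
  [/\ (1 <= size q)%N,
      (forall i, (i < size q)%N ->
         if odd i then left_pyramid a (nth dflt q i).2 (nth dflt q i).1
         else right_pyramid a (nth dflt q i).2 (nth dflt q i).1),
      (\sum_(x <- q) hsize x.1)%N = m,
      (nth dflt q 0).2 = 0 &
      (forall i, (i.+1 < size q)%N ->
         let si := (nth dflt q i).2 in let sj := (nth dflt q i.+1).2 in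
         if odd i then 1 <= si - sj <= a%:Z - 1
         else 1 <= sj - si <= a%:Z - 1)].

Definition bij_between (X Y : Type) (P : X -> Prop) (Q : Y -> Prop) : Prop :=
  exists f : X -> Y,
    [/\ forall x, P x -> Q (f x),
        forall x y, P x -> P y -> f x = f y -> x = y &
        forall z, Q z -> exists2 x, P x & f x = z].

(* A pyramid p with bottom ]0,a[ is the heap product I * Q of its right part I
   (the largest part of p that is closed under "lies below" and sits right of 0,
   a right 0-pyramid) with the remaining pieces pushed down, which form a
   pyramid Q whose bottom ]b,b+a[ satisfies -a < b < 0.  Reflecting the line
   so that the bottom of Q becomes ]0,a[ turns Q into a smaller pyramid of the
   same kind; reflection exchanges right and left pyramids, and decomposing
   recursively yields the alternating sequence.  Multiplying the pyramids of a
   sequence back together inverts this decomposition. *)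

From HB Require Import structures.
From mathcomp Require Import all_boot all_order all_algebra.
From mathcomp Require Import finmap zify.
Set Implicit Arguments. Unset Strict Implicit. Unset Printing Implicit Defensive.
Import Order.TTheory GRing.Theory Num.Theory.
Local Open Scope fset_scope.
Local Open Scope ring_scope.

Lemma bigmax_seq_attained (T : eqType) (r : seq T) (P : pred T) (F : T -> nat) :
  (0 < \max_(x <- r | P x) F x)%N ->
  exists2 x, x \in r & P x /\ F x = (\max_(x <- r | P x) F x)%N.
Proof.
elim: r => [|y r IHr]; first by rewrite big_nil.
rewrite big_cons; case: ifP => Py; last first.
  by move=> /IHr [x xr Hx]; exists x; rewrite // inE xr orbT.
case: (leqP (F y) (\max_(x <- r | P x) F x)%N) => [le_y_max|_ _].
  by move=> /IHr [x xr Hx]; exists x; rewrite // inE xr orbT.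
by exists y; rewrite ?mem_head.
Qed.

Section Heaps.
Variable a : nat.
Hypothesis a_gt0 : (0 < a)%N.

Local Notation conc := (concurrent a).

Lemma concurrentC s t : conc s t = conc t s.
Proof. by rewrite /concurrent distrC. Qed.

Lemma concurrent_refl s : conc s s.
Proof. rewrite /concurrent; lia. Qed.

Lemma rest_level_leP (c : config) s n :
  reflect (forall x, x \in c -> conc x.1 s -> (x.2 < n)%N) (rest_level a c s <= n)%N.
Proof.
apply: (iffP (bigmax_leqP_seq _ _ _ _)) => le_n x.
- by move=> xc /(le_n x xc).
- exact: le_n.
Qed.

Lemma rest_level_gt (c : config) s x :
  x \in c -> conc x.1 s -> (x.2 < rest_level a c s)%N.
Proof. by move=> xc cx; apply: (@leq_bigmax_seq _ _ _ (fun x => x.2.+1) x). Qed.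

Lemma rest_level_attained (c : config) s : (0 < rest_level a c s)%N ->
  exists2 x, x \in c & conc x.1 s /\ x.2.+1 = rest_level a c s.
Proof. by move=> /bigmax_seq_attained [x xc Hx]; exists x. Qed.

Lemma rest_level0 s : rest_level a fset0 s = 0%N.
Proof. by apply/eqP; rewrite -leqn0; apply/rest_level_leP => x; rewrite in_fset0. Qed.

(** * Heaps as well-formed configurations *)

(* Heaps are the configurations in which every raised piece rests on a
   concurrent piece one level down and concurrent pieces never share a level. *)
Definition separated (H : config) :=
  forall x y, x \in H -> y \in H -> conc x.1 y.1 -> x.2 = y.2 -> x = y.

Definition supported (H : config) :=
  forall x, x \in H -> (0 < x.2)%N ->
    exists2 y, y \in H & conc y.1 x.1 /\ y.2 = x.2.-1.

Definition wf_heap (H : config) := supported H /\ separated H.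

Lemma separated_sub (H K : config) : separated H -> K `<=` H -> separated K.
Proof. by move=> sepH /fsubsetP KH x y xK yK; apply: sepH; apply: KH. Qed.

Lemma wf_heap0 : wf_heap fset0.
Proof. by split=> [x|x y]; rewrite in_fset0. Qed.

Lemma wf_heap_drop (H : config) s : wf_heap H -> wf_heap ((s, rest_level a H s) |` H).
Proof.
move=> [suppH sepH]; split.
- move=> x; rewrite in_fset1U => /predU1P [-> /= lvl_gt0|xH lvl_gt0].
    have [y yH [cy <-]] := rest_level_attained lvl_gt0.
    by exists y; rewrite ?in_fset1U ?yH ?orbT.
  have [y yH Hy] := suppH x xH lvl_gt0.
  by exists y; rewrite ?in_fset1U ?yH ?orbT.
- move=> x y; rewrite !in_fset1U.
  move=> /predU1P [->|xH] /predU1P [->|yH] //= cxy exy.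
  + by move: (rest_level_gt (s := s) yH); rewrite concurrentC cxy exy ltnn => /(_ isT).
  + by move: (rest_level_gt xH cxy); rewrite exy ltnn.
  + exact: sepH.
Qed.

Lemma wf_heap_of l : wf_heap (heap_of a l).
Proof. elim: l => [|s l IHl] /=; [exact: wf_heap0 | exact: wf_heap_drop]. Qed.

(* A highest piece of a well-formed heap can be taken as the last one dropped. *)
Section HighestPiece.
Variables (H : config) (x : piece).
Hypotheses (wfH : wf_heap H) (xH : x \in H).
Hypothesis x_top : forall y, y \in H -> (y.2 <= x.2)%N.

Lemma wf_heapD1_top : wf_heap (H `\ x).
Proof.
have [suppH sepH] := wfH; split; last exact: separated_sub sepH (fsubD1set _ _).
move=> y; rewrite in_fsetD1 => /andP [_ yH] y_gt0.
have [z zH [cz ez]] := suppH y yH y_gt0.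
exists z => //; rewrite in_fsetD1 zH andbT.
by apply/eqP => zx; move: (x_top yH); rewrite -zx ez; lia.
Qed.

Lemma rest_levelD1_top : rest_level a (H `\ x) x.1 = x.2.
Proof.
have [suppH sepH] := wfH; apply/eqP; rewrite eqn_leq; apply/andP; split.
  apply/rest_level_leP => y; rewrite in_fsetD1 => /andP [yx yH] cy.
  rewrite ltn_neqAle x_top // andbT; apply: contraNneq yx => eyx.
  by apply/eqP; apply: sepH.
case: (posnP x.2) => [-> //|x_gt0].
have [z zH [cz ez]] := suppH x xH x_gt0.
have zH' : z \in H `\ x.
  rewrite in_fsetD1 zH andbT; apply/eqP => zx.
  by move: ez x_gt0; rewrite zx; case: (x.2) => // k; lia.
by have := rest_level_gt zH' cz; rewrite ez prednK.
Qed.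

End HighestPiece.

Lemma wf_heap_is_heap (H : config) : wf_heap H -> is_heap a H.
Proof.
move Hn : #|` H| => n; elim: n H Hn => [|n IHn] H Hn wfH.
  by exists [::]; apply/eqP; rewrite -cardfs_eq0 Hn.
have [x0 x0H] : exists x, x \in H by apply/fset0Pn; rewrite -cardfs_gt0 Hn.
pose M := (\max_(x <- enum_fset H) x.2)%N.
have le_M y : y \in H -> (y.2 <= M)%N.
  by move=> yH; apply: (@leq_bigmax_seq _ _ _ (fun x => x.2) y).
have [x xH xM] : exists2 x, x \in H & x.2 = M.
  case: (posnP M) => [M0|/bigmax_seq_attained [x xH [_ eM]]]; last by exists x.
  by exists x0; move: (le_M x0 x0H); rewrite M0; lia.
have x_top y : y \in H -> (y.2 <= x.2)%N by rewrite xM; exact: le_M.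
have card_H' : #|` H `\ x| = n by move: Hn; rewrite (cardfsD1 x) xH => -[].
have [l el] := IHn _ card_H' (wf_heapD1_top wfH xH x_top).
exists (x.1 :: l); rewrite /= -el (rest_levelD1_top wfH xH x_top).
by rewrite -surjective_pairing fsetD1K.
Qed.

Lemma is_heapP (H : config) : is_heap a H <-> wf_heap H.
Proof. by split=> [[l ->]|]; [exact: wf_heap_of | exact: wf_heap_is_heap]. Qed.

(** * Stacking a configuration on a heap *)

Fixpoint stack_level_fuel (B S : config) (n : nat) (y : piece) : nat :=
  if n is n'.+1 then
    maxn (rest_level a B y.1)
      (\max_(z <- enum_fset S | conc z.1 y.1 && (z.2 < y.2)%N)
         (stack_level_fuel B S n' z).+1)%N
  else 0%N.

(* Level reached by the piece y of S when S is put on top of B: the levels of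
   S only record in which order its pieces are dropped. *)
Definition stack_level (B S : config) (y : piece) := stack_level_fuel B S y.2.+1 y.

Lemma stack_level_fuel_enough B S n m y : (y.2 < n)%N -> (y.2 < m)%N ->
  stack_level_fuel B S n y = stack_level_fuel B S m y.
Proof.
elim: n m y => [|n IHn] [|m] y //= y_lt_n y_lt_m; congr maxn.
by apply: eq_bigr => z /andP [_ lt_zy]; congr _.+1; apply: IHn; lia.
Qed.

Lemma stack_levelE B S y : stack_level B S y = maxn (rest_level a B y.1)
  (\max_(z <- enum_fset S | conc z.1 y.1 && (z.2 < y.2)%N) (stack_level B S z).+1)%N.
Proof.
rewrite {1}/stack_level [LHS]/=; congr maxn; apply: eq_bigr => z /andP [_ lt_zy].
by congr _.+1; apply: stack_level_fuel_enough; lia.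
Qed.

Lemma rest_level_le_stack_level B S y : (rest_level a B y.1 <= stack_level B S y)%N.
Proof. by rewrite stack_levelE leq_maxl. Qed.

Lemma stack_level_lt B S y z : z \in S -> conc z.1 y.1 -> (z.2 < y.2)%N ->
  (stack_level B S z < stack_level B S y)%N.
Proof.
move=> zS czy lt_zy; rewrite [stack_level B S y]stack_levelE.
apply: leq_trans (leq_maxr _ _).
by apply: (@leq_bigmax_seq _ _ _ (fun z => (stack_level B S z).+1) z); rewrite ?czy.
Qed.

Lemma stack_level_le B S y n : (rest_level a B y.1 <= n)%N ->
  (forall z, z \in S -> conc z.1 y.1 -> (z.2 < y.2)%N -> (stack_level B S z < n)%N) ->
  (stack_level B S y <= n)%N.
Proof.
move=> le_rest le_S; rewrite stack_levelE geq_max le_rest /=.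
by apply/bigmax_leqP_seq => z zS /andP [czy lt_zy]; apply: le_S.
Qed.

Lemma stack_level_attained B S y : (0 < stack_level B S y)%N ->
  rest_level a B y.1 = stack_level B S y \/
  exists2 z, z \in S &
    [/\ conc z.1 y.1, (z.2 < y.2)%N & (stack_level B S z).+1 = stack_level B S y].
Proof.
rewrite [in X in X -> _]stack_levelE [in X in _ \/ X]stack_levelE.
set M := (\max_(z <- _ | _) _)%N.
case: (leqP (rest_level a B y.1) M) => [le_rest|lt_rest _].
  by move=> /bigmax_seq_attained [z zS [/andP [czy lt_zy] ez]]; right; exists z.
by left; rewrite stack_levelE (maxn_idPl (ltnW lt_rest)).
Qed.

Section StackSeparated.
Variables (B S : config).
Hypothesis sepS : separated S.

Lemma stack_level_ltE y z : y \in S -> z \in S -> conc z.1 y.1 ->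
  (stack_level B S z < stack_level B S y)%N = (z.2 < y.2)%N.
Proof.
move=> yS zS czy; case: (ltngtP z.2 y.2) => [lt_zy|lt_yz|e_yz].
- exact: stack_level_lt.
- by apply/negbTE; rewrite -leqNgt ltnW // stack_level_lt // concurrentC.
- by rewrite (sepS zS yS czy e_yz) ltnn.
Qed.

Lemma stack_level_inj y z : y \in S -> z \in S -> y.1 = z.1 ->
  stack_level B S y = stack_level B S z -> y = z.
Proof.
move=> yS zS e1 eL; have cyz : conc y.1 z.1 by rewrite e1 concurrent_refl.
have czy : conc z.1 y.1 by rewrite concurrentC.
case: (ltngtP z.2 y.2) => [lt_zy|lt_yz|e_zy]; last exact: sepS.
- by move: (stack_level_lt B zS czy lt_zy); rewrite eL ltnn.
- by move: (stack_level_lt B yS cyz lt_yz); rewrite eL ltnn.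
Qed.

End StackSeparated.

Definition stack (B S : config) : config := [fset (y.1, stack_level B S y) | y in S].

Definition hmul (B S : config) : config := B `|` stack B S.

Lemma stackP B S w :
  reflect (exists2 y, y \in S & w = (y.1, stack_level B S y)) (w \in stack B S).
Proof. exact: imfsetP. Qed.

Lemma mem_stack B S y : y \in S -> (y.1, stack_level B S y) \in stack B S.
Proof. by move=> yS; apply/stackP; exists y. Qed.

Lemma stackr0 B : stack B fset0 = fset0.
Proof. by apply/fsetP => w; rewrite in_fset0; apply/stackP => -[y]; rewrite in_fset0. Qed.

Lemma card_stack B S : separated S -> #|` stack B S| = #|` S|.
Proof.
move=> sepS; apply/eqP/card_in_imfsetP => y z yS zS /= [e1 e2].
exact: (stack_level_inj sepS yS zS e1 e2).
Qed.

Lemma stack_disjoint B S w : w \in B -> w \notin stack B S.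
Proof.
move=> wB; apply/stackP => -[y yS ew].
have := @rest_level_gt B y.1 w wB; rewrite ew concurrent_refl => /(_ isT).
by rewrite ltnNge rest_level_le_stack_level.
Qed.

Lemma wf_hmul B S : wf_heap B -> separated S -> wf_heap (hmul B S).
Proof.
move=> [suppB sepB] sepS; split.
- move=> w; rewrite in_fsetU => /orP [wB w_gt0|/stackP [y yS ->] /= y_gt0].
    have [v vB Hv] := suppB w wB w_gt0.
    by exists v; rewrite ?in_fsetU ?vB.
  case: (stack_level_attained y_gt0) => [e|[z zS [czy _ ez]]].
    rewrite -e in y_gt0; have [v vB [cv ev]] := rest_level_attained y_gt0.
    by exists v; rewrite ?in_fsetU ?vB //= -e -ev.
  by exists (z.1, stack_level B S z); rewrite ?in_fsetU ?mem_stack ?orbT //= -ez.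
- move=> w v; rewrite !in_fsetU.
  move=> /orP [wB|/stackP [y yS ->]] /orP [vB|/stackP [z zS ->]] /= cwv ewv.
  + exact: sepB.
  + by move: (rest_level_gt wB cwv); rewrite ewv ltnNge rest_level_le_stack_level.
  + move: (@rest_level_gt B y.1 v vB); rewrite concurrentC cwv -ewv => /(_ isT).
    by rewrite ltnNge rest_level_le_stack_level.
  + case: (ltngtP z.2 y.2) => [lt_zy|lt_yz|e_yz].
    * have czy : conc z.1 y.1 by rewrite concurrentC.
      by move: (stack_level_lt B zS czy lt_zy); rewrite ewv ltnn.
    * by move: (stack_level_lt B yS cwv lt_yz); rewrite ewv ltnn.
    * by rewrite (sepS y z yS zS cwv (esym e_yz)).
Qed.

Lemma card_hmul B S : separated S -> #|` hmul B S| = (#|` B| + #|` S|)%N.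
Proof.
move=> sepS; rewrite -(card_stack B sepS) -cardfsUI.
suff -> : B `&` stack B S = fset0 by rewrite cardfs0 addn0.
apply/fsetP => w; rewrite in_fsetI in_fset0.
by apply/negbTE/nandP; case: (boolP (w \in B)) => [/stack_disjoint|]; [right|left].
Qed.

Lemma stack_level_restack B C S y : separated S -> y \in S ->
  stack_level B (stack C S) (y.1, stack_level C S y) = stack_level B S y.
Proof.
move=> sepS; elim: {y}_.+1 {-2}y (ltnSn y.2) => [//|n IHn] y lt_yn yS.
apply/eqP; rewrite eqn_leq; apply/andP; split; apply: stack_level_le.
- exact: rest_level_le_stack_level.
- move=> _ /stackP [z zS ->] /= czy lt_zy.
  have lt_zy' : (z.2 < y.2)%N by rewrite -(stack_level_ltE C sepS).
  by rewrite IHn //; [exact: stack_level_lt | exact: leq_trans lt_zy' lt_yn].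
- exact: (rest_level_le_stack_level B (stack C S) (y.1, _)).
- move=> z zS czy lt_zy; rewrite -IHn //; last exact: leq_trans lt_zy lt_yn.
  apply: (stack_level_lt _ (mem_stack C zS)) => //=.
  exact: stack_level_lt.
Qed.

Lemma stack_restack B C S : separated S -> stack B (stack C S) = stack B S.
Proof.
move=> sepS; apply/fsetP => w; apply/stackP/stackP => -[y].
  by move=> /stackP [z zS ->] ->; exists z; rewrite //= stack_level_restack.
move=> yS ->; exists (y.1, stack_level C S y); first exact: mem_stack.
by rewrite /= stack_level_restack.
Qed.

Definition down_closed (p I : config) :=
  forall x y, x \in I -> y \in p -> conc y.1 x.1 -> (y.2 < x.2)%N -> y \in I.

Lemma stack_level_down_closed p I y : wf_heap p -> I `<=` p -> down_closed p I ->
  y \in p `\` I -> stack_level I (p `\` I) y = y.2.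
Proof.
move=> [suppp sepp] /fsubsetP Ip dcI.
elim: {y}_.+1 {-2}y (ltnSn y.2) => [//|n IHn] y lt_yn.
rewrite in_fsetD => /andP [yI yp]; apply/eqP; rewrite eqn_leq; apply/andP; split.
  apply: stack_level_le.
    apply/rest_level_leP => x xI cxy; case: (ltngtP x.2 y.2) => // [lt_yx|e_xy].
      by move: yI; rewrite (dcI x y xI yp _ lt_yx) // concurrentC.
    by move: (xI); rewrite (sepp x y (Ip x xI) yp cxy e_xy) (negbTE yI).
  move=> z; rewrite in_fsetD => /andP [zI zp] czy lt_zy.
  by rewrite IHn ?in_fsetD ?zI ?zp //; exact: leq_trans lt_zy lt_yn.
case: (posnP y.2) => [-> //|y_gt0].
have [z zp [czy ez]] := suppp y yp y_gt0.
have ey : y.2 = z.2.+1 by rewrite ez prednK.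
case: (boolP (z \in I)) => [zI|zNI].
  by rewrite ey; apply: leq_trans (rest_level_gt zI czy) (rest_level_le_stack_level _ _ _).
have lt_zy : (z.2 < y.2)%N by rewrite ey.
have zR : z \in p `\` I by rewrite in_fsetD zNI zp.
have := stack_level_lt I zR czy lt_zy.
by rewrite IHn ?ey //; exact: leq_trans lt_zy lt_yn.
Qed.

Lemma stack_down_closed p I : wf_heap p -> I `<=` p -> down_closed p I ->
  stack I (p `\` I) = p `\` I.
Proof.
move=> wfp Ip dcI; apply/fsetP => w; apply/stackP/idP => [[y yR ->]|wR].
  by rewrite stack_level_down_closed // -surjective_pairing.
by exists w; rewrite // stack_level_down_closed // -surjective_pairing.
Qed.

Lemma stack0_wf Q : wf_heap Q -> stack fset0 Q = Q.
Proof.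
move=> wfQ; have := @stack_down_closed Q fset0 wfQ (fsub0set _).
by rewrite fsetD0; apply=> x y; rewrite in_fset0.
Qed.

(** * The right part of a pyramid *)

Definition down_closedb (p J : config) : bool :=
  all (fun x => all (fun y => conc y.1 x.1 && (y.2 < x.2)%N ==> (y \in J))
    (enum_fset p)) (enum_fset J).

Lemma down_closedP p J : reflect (down_closed p J) (down_closedb p J).
Proof.
apply: (iffP allP) => [dcJ x y xJ yp cyx lt_yx|dcJ x xJ].
  by have /allP /(_ y yp) := dcJ x xJ; rewrite cyx lt_yx.
by apply/allP => y yp; apply/implyP => /andP [cyx lt_yx]; apply: (dcJ x).
Qed.

(* The largest down-closed part of p whose pieces cover subintervals of ]0,+oo[. *)
Definition right_part (p : config) : config :=
  [fset x in p | has (fun J : config =>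
     [&& x \in J, down_closedb p J & all (fun y => 0 <= y.1) (enum_fset J)])
     (enum_fset (fpowerset p))].

Lemma right_partP p x : reflect (exists J : config,
   [/\ J `<=` p, x \in J, down_closed p J & forall y, y \in J -> 0 <= y.1])
  (x \in right_part p).
Proof.
rewrite /right_part !inE /=; apply: (iffP andP).
- move=> [_ /hasP [J]]; rewrite fpowersetE => Jp.
  by move=> /andP [xJ /andP [/down_closedP dcJ /allP J_ge0]]; exists J.
- move=> [J [Jp xJ dcJ J_ge0]]; split; first exact: (fsubsetP Jp).
  apply/hasP; exists J; first by rewrite fpowersetE.
  by rewrite xJ /=; apply/andP; split; [apply/down_closedP | apply/allP].
Qed.

Lemma right_part_sub p : right_part p `<=` p.
Proof. by apply/fsubsetP => x /right_partP [J [/fsubsetP Jp xJ _ _]]; apply: Jp. Qed.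

Lemma right_part_down_closed p : down_closed p (right_part p).
Proof.
move=> x y /right_partP [J [Jp xJ dcJ J_ge0]] yp cyx lt_yx.
by apply/right_partP; exists J; split => //; apply: (dcJ x).
Qed.

Lemma right_part_ge0 p y : y \in right_part p -> 0 <= y.1.
Proof. by move=> /right_partP [J [_ yJ _]]; apply. Qed.

Lemma right_part_max p J : J `<=` p -> down_closed p J ->
  (forall y, y \in J -> 0 <= y.1) -> J `<=` right_part p.
Proof. by move=> Jp dcJ J_ge0; apply/fsubsetP => x xJ; apply/right_partP; exists J. Qed.

Lemma in_bottom_pieces (H : config) x :
  (x \in bottom_pieces H) = (x \in H) && (x.2 == 0%N).
Proof. by rewrite !inE. Qed.

Definition pyramid_at (p : config) (b : int) :=
  wf_heap p /\ bottom_pieces p = [fset (b, 0%N)].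

Lemma pyramid_atP p b : pyramid_at p b <-> is_pyramid a p /\ (b, 0%N) \in p.
Proof.
split=> [[wfp bp]|[[/is_heapP wfp /eqP /cardfs1P [x ex]] bp]].
  split; first by split; [apply/is_heapP | rewrite bp cardfs1].
  by have := fset11 (b, 0%N); rewrite -bp in_bottom_pieces => /andP [].
split=> //; have : (b, 0%N) \in bottom_pieces p by rewrite in_bottom_pieces bp.
by rewrite ex in_fset1 => /eqP <-.
Qed.

Lemma pyramid_at_bottom p b y : pyramid_at p b -> y \in p -> y.2 = 0%N -> y = (b, 0%N).
Proof.
move=> [_ bp] yp y0; have : y \in bottom_pieces p by rewrite in_bottom_pieces yp y0.
by rewrite bp in_fset1 => /eqP.
Qed.

Lemma mem_pyramid_at p b : pyramid_at p b -> (b, 0%N) \in p.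
Proof. by move=> /pyramid_atP []. Qed.

Lemma is_pyramid_size H : is_pyramid a H -> (0 < #|` H|)%N.
Proof. by move=> [_ card1]; rewrite -card1 fsubset_leq_card ?fset_sub. Qed.

(* The pieces of p outside its right part, pushed down onto the axis. *)
Definition rest_pyramid (p : config) : config := stack fset0 (p `\` right_part p).

Section Decomposition.
Variable p : config.
Hypothesis pp : pyramid_at p 0.

Let suppp : supported p := proj1 (proj1 pp).
Let sepp : separated p := proj2 (proj1 pp).

Local Notation I := (right_part p).
Local Notation R := (p `\` right_part p).

Lemma mem0_right_part : (0, 0%N) \in I.
Proof.
apply/right_partP; exists [fset (0, 0%N)]; split.
- by rewrite fsub1set; apply: mem_pyramid_at pp.
- exact: fset11.
- by move=> x y /fset1P -> /=.
- by move=> y /fset1P ->.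
Qed.

Lemma pyramid_at_right_part : pyramid_at I 0.
Proof.
split; first split.
- move=> x xI x_gt0.
  have [y yp [cyx ey]] := suppp (fsubsetP (right_part_sub p) x xI) x_gt0.
  by exists y => //; apply: (right_part_down_closed xI yp cyx); rewrite ey; lia.
- exact: separated_sub sepp (right_part_sub p).
- apply/fsetP => w; rewrite in_bottom_pieces in_fset1; apply/andP/eqP.
  + move=> [wI /eqP w0]; apply: (pyramid_at_bottom pp) => //.
    exact: (fsubsetP (right_part_sub p)).
  + by move=> ->; rewrite mem0_right_part.
Qed.

Lemma right_part_pyramid : right_pyramid a 0 I.
Proof.
have [pI I0] := (pyramid_atP I 0).1 pyramid_at_right_part.
by split=> // x /right_part_ge0.
Qed.

Lemma separated_rest : separated R.
Proof. exact: separated_sub sepp (fsubsetDl _ _). Qed.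

Lemma rest_above_axis y : y \in R -> (0 < y.2)%N.
Proof.
rewrite in_fsetD lt0n => /andP [yNI yp]; apply: contraNneq yNI => y0.
by rewrite (pyramid_at_bottom pp yp y0) mem0_right_part.
Qed.

Definition minimal_rest y :=
  y \in R /\ forall z, z \in R -> conc z.1 y.1 -> ~ (z.2 < y.2)%N.

Lemma stack_level0_rest y : y \in R -> stack_level fset0 R y = 0%N <-> minimal_rest y.
Proof.
move=> yR; split=> [L0|[_ miny]].
  by split=> // z zR czy lt_zy; have := stack_level_lt fset0 zR czy lt_zy; rewrite L0.
apply/eqP; rewrite -leqn0; apply: stack_level_le; first by rewrite rest_level0.
by move=> z zR czy /(miny z zR czy).
Qed.

Lemma minimal_rest_support y : minimal_rest y ->
  exists2 z, z \in I & conc z.1 y.1.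
Proof.
move=> [yR miny]; have yp : y \in p by move: yR; rewrite in_fsetD => /andP [].
have [z zp [czy ez]] := suppp yp (rest_above_axis yR).
exists z => //; apply: contraT => zNI; case: (miny z _ czy).
  by rewrite in_fsetD zNI.
by rewrite ez; have := rest_above_axis yR; lia.
Qed.

Lemma minimal_rest_gt y : minimal_rest y -> -(a%:Z) < y.1.
Proof.
move=> /minimal_rest_support [z /right_part_ge0 z_ge0].
by rewrite /concurrent; lia.
Qed.

(* Otherwise [y |` I] would be a larger down-closed part of p right of 0. *)
Lemma minimal_rest_lt0 y : minimal_rest y -> y.1 < 0.
Proof.
move=> [yR miny]; move: (yR); rewrite in_fsetD => /andP [yNI yp].
rewrite ltNge; apply: contraNN yNI => y_ge0.
suff /fsubsetP : y |` I `<=` I by apply; exact: fset1U1.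
apply: right_part_max.
- by rewrite fsubUset fsub1set yp right_part_sub.
- move=> x w /fset1UP [->|xI] wp cwx lt_wx; apply/fset1UP; right.
    by apply: contraT => wNI; case: (miny w _ cwx lt_wx); rewrite in_fsetD wNI.
  exact: right_part_down_closed xI wp cwx lt_wx.
- by move=> w /fset1UP [->|/right_part_ge0].
Qed.

Lemma minimal_rest_uniq y y' : minimal_rest y -> minimal_rest y' -> y = y'.
Proof.
move=> my my'; have c : conc y.1 y'.1.
  move: (minimal_rest_gt my) (minimal_rest_lt0 my).
  move: (minimal_rest_gt my') (minimal_rest_lt0 my'); rewrite /concurrent; lia.
case: my my' => yR miny [y'R miny'].
case: (ltngtP y.2 y'.2) => [lt_yy'|lt_y'y|]; last exact: separated_rest.
- by case: (miny' y yR c lt_yy').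
- by case: (miny y' y'R _ lt_y'y); rewrite concurrentC.
Qed.

Lemma minimal_rest_exists : R != fset0 -> exists y, minimal_rest y.
Proof.
move=> /fset0Pn [y0 y0R].
elim: {y0}_.+1 {-2}y0 (ltnSn y0.2) y0R => [//|n IHn] y lt_yn yR.
case: (boolP [exists z : R, conc (val z).1 y.1 && ((val z).2 < y.2)%N]).
  move=> /existsP [[z zR] /= /andP [czy lt_zy]].
  by apply: (IHn z) => //; exact: leq_trans lt_zy lt_yn.
move=> /existsPn noz; exists y; split=> // z zR czy lt_zy.
by have := noz [` zR]; rewrite /= czy lt_zy.
Qed.

Lemma wf_rest_pyramid : wf_heap (rest_pyramid p).
Proof. by have := wf_hmul wf_heap0 separated_rest; rewrite /hmul fset0U. Qed.

Lemma pyramid_rest y0 : minimal_rest y0 -> pyramid_at (rest_pyramid p) y0.1.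
Proof.
move=> my0; split; first exact: wf_rest_pyramid.
apply/fsetP => w; rewrite in_bottom_pieces in_fset1; apply/andP/eqP.
- move=> [/stackP [y yR ->] /= /eqP L0].
  by rewrite L0 (minimal_rest_uniq ((stack_level0_rest yR).1 L0) my0).
- have y0R : y0 \in R by case: my0.
  by move=> ->; have := mem_stack fset0 y0R; rewrite ((stack_level0_rest y0R).2 my0).
Qed.

Lemma rest_pyramid_at : rest_pyramid p != fset0 ->
  exists2 b, pyramid_at (rest_pyramid p) b & -(a%:Z) < b < 0.
Proof.
move=> Q_neq0; have [|y0 my0] := minimal_rest_exists.
  by apply: contra_neq Q_neq0; rewrite /rest_pyramid => ->; rewrite stackr0.
exists y0.1; first exact: pyramid_rest.
by rewrite minimal_rest_gt ?minimal_rest_lt0.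
Qed.

Lemma hmul_right_part_rest : hmul I (rest_pyramid p) = p.
Proof.
rewrite /hmul /rest_pyramid stack_restack; last exact: separated_rest.
rewrite stack_down_closed;
  [|exact: proj1 pp|exact: right_part_sub|exact: right_part_down_closed].
by have /fsetIidPr {1}<- := right_part_sub p; rewrite fsetID.
Qed.

Lemma card_right_part_rest : #|` p| = (#|` I| + #|` rest_pyramid p|)%N.
Proof.
by rewrite -{1}hmul_right_part_rest card_hmul //; case: wf_rest_pyramid.
Qed.

End Decomposition.

Section Product.
Variables (P Q : config) (b : int).
Hypotheses (pP : pyramid_at P 0) (P_ge0 : forall y, y \in P -> 0 <= y.1).
Hypotheses (pQ : pyramid_at Q b) (b_gt : -(a%:Z) < b) (b_lt0 : b < 0).

Let suppQ : supported Q := proj1 (proj1 pQ).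
Let sepQ : separated Q := proj2 (proj1 pQ).

Lemma pyramid_at_hmul : pyramid_at (hmul P Q) 0.
Proof.
split; first exact: wf_hmul (proj1 pP) sepQ.
apply/fsetP => w; rewrite in_bottom_pieces in_fset1 in_fsetU; apply/andP/eqP.
- move=> [/orP [wP|/stackP [y yQ ->]] /eqP /= w0]; first exact: (pyramid_at_bottom pP).
  exfalso; have [y0|y_gt0] := posnP y.2.
    have := rest_level_le_stack_level P Q y.
    rewrite w0 leqn0 (pyramid_at_bottom pQ yQ y0) /= => /eqP r0.
    have := rest_level_gt (s := b) (mem_pyramid_at pP).
    by rewrite r0 /concurrent /=; lia.
  have [z zQ [czy ez]] := suppQ yQ y_gt0.
  have lt_zy : (z.2 < y.2)%N by rewrite ez; lia.
  by have := stack_level_lt P zQ czy lt_zy; rewrite w0.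
- by move=> ->; rewrite (mem_pyramid_at pP).
Qed.

Lemma hmul_diff : hmul P Q `\` P = stack P Q.
Proof.
apply/fsetP => w; rewrite in_fsetD in_fsetU.
by case: (boolP (w \in P)) => [/(stack_disjoint Q)/negbTE ->|].
Qed.

(* Following supports downwards from a piece of Q leads to the bottom of Q,
   which lies left of 0. *)
Lemma stack_notin_right_part y :
  y \in Q -> (y.1, stack_level P Q y) \notin right_part (hmul P Q).
Proof.
elim: {y}_.+1 {-2}y (ltnSn y.2) => [//|n IHn] y lt_yn yQ.
have [y0|y_gt0] := posnP y.2.
  by apply/negP => /right_part_ge0; rewrite (pyramid_at_bottom pQ yQ y0) /=; lia.
have [z zQ [czy ez]] := suppQ yQ y_gt0.
have lt_zy : (z.2 < y.2)%N by rewrite ez; lia.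
apply: contra (IHn z (leq_trans lt_zy lt_yn) zQ) => yI.
apply: (right_part_down_closed yI); rewrite //= ?stack_level_lt //.
by rewrite in_fsetU mem_stack ?orbT.
Qed.

Lemma right_part_hmul : right_part (hmul P Q) = P.
Proof.
apply/eqP; rewrite eqEfsubset; apply/andP; split.
  apply/fsubsetP => x xI; apply: contraT => xNP.
  move: (fsubsetP (right_part_sub _) x xI).
  rewrite in_fsetU (negbTE xNP) => /stackP [y yQ ex].
  by move: xI; rewrite ex (negbTE (stack_notin_right_part yQ)).
apply: right_part_max => //; first exact: fsubsetUl.
move=> x w xP; rewrite in_fsetU => /orP [//|/stackP [y yQ ->]] /= cyx lt_yx.
have := rest_level_gt xP (etrans (concurrentC _ _) cyx).
by rewrite ltnNge (leq_trans (rest_level_le_stack_level P Q y) (ltnW lt_yx)).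
Qed.

Lemma rest_pyramid_hmul : rest_pyramid (hmul P Q) = Q.
Proof.
by rewrite /rest_pyramid right_part_hmul hmul_diff stack_restack // stack0_wf //; case: pQ.
Qed.

End Product.

(** * Reflection *)

(* The reflection t |-> c - t of the line maps the piece covering ]s, s+a[
   to the piece covering ]c-s-a, c-s[. *)
Definition mirror_piece (c : int) (x : piece) : piece := (c - x.1 - a%:Z, x.2).

Definition mirror (c : int) (H : config) : config := [fset mirror_piece c x | x in H].

Lemma mirror_pieceK c : involutive (mirror_piece c).
Proof. by move=> [s h]; rewrite /mirror_piece /=; congr pair; lia. Qed.

Lemma mem_mirror c H x : (x \in mirror c H) = (mirror_piece c x \in H).
Proof.
apply/imfsetP/idP => [[y yH ->]|xH]; first by rewrite mirror_pieceK.
by exists (mirror_piece c x); rewrite ?mirror_pieceK.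
Qed.

Lemma mirrorK c : involutive (mirror c).
Proof. by move=> H; apply/fsetP => x; rewrite !mem_mirror mirror_pieceK. Qed.

Lemma mirror0 c : mirror c fset0 = fset0.
Proof. by apply/fsetP => x; rewrite mem_mirror !in_fset0. Qed.

Lemma card_mirror c H : #|` mirror c H| = #|` H|.
Proof. by apply/eqP/card_in_imfsetP => x y _ _; apply: (can_inj (mirror_pieceK c)). Qed.

Lemma concurrent_mirror c x y :
  conc (mirror_piece c x).1 (mirror_piece c y).1 = conc x.1 y.1.
Proof. by rewrite /concurrent /=; apply/idP/idP; lia. Qed.

Lemma wf_mirror c H : wf_heap H -> wf_heap (mirror c H).
Proof.
move=> [suppH sepH]; split.
- move=> x; rewrite mem_mirror => xH x_gt0; have [y yH [cyx ey]] := suppH _ xH x_gt0.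
  exists (mirror_piece c y); first by rewrite mem_mirror mirror_pieceK.
  by rewrite -(concurrent_mirror c) mirror_pieceK.
- move=> x y; rewrite !mem_mirror => xH yH cxy exy.
  by apply: (can_inj (mirror_pieceK c)); apply: sepH; rewrite ?concurrent_mirror.
Qed.

Lemma wf_mirrorE c H : wf_heap (mirror c H) <-> wf_heap H.
Proof. by split=> [/(wf_mirror c)|/wf_mirror //]; rewrite mirrorK. Qed.

Lemma bottom_pieces_mirror c H : bottom_pieces (mirror c H) = mirror c (bottom_pieces H).
Proof. by apply/fsetP => x; rewrite in_bottom_pieces !mem_mirror in_bottom_pieces. Qed.

Lemma is_pyramid_mirror c H : is_pyramid a (mirror c H) <-> is_pyramid a H.
Proof. by rewrite /is_pyramid !is_heapP wf_mirrorE bottom_pieces_mirror card_mirror. Qed.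

Lemma pyramid_at_mirror c H t : pyramid_at (mirror c H) t <-> pyramid_at H (c - t - a%:Z).
Proof. by rewrite !pyramid_atP is_pyramid_mirror mem_mirror. Qed.

Lemma right_pyramid_mirror c s H :
  right_pyramid a s (mirror c H) <-> left_pyramid a (c - s) H.
Proof.
split=> -[pH sH leftH]; split.
- by rewrite -(is_pyramid_mirror c).
- by move: sH; rewrite mem_mirror /mirror_piece /=.
- move=> x xH; have := leftH (mirror_piece c x); rewrite mem_mirror mirror_pieceK.
  by move=> /(_ xH) /=; lia.
- by rewrite is_pyramid_mirror.
- by rewrite mem_mirror /mirror_piece /=.
- by move=> x; rewrite mem_mirror => /leftH /=; lia.
Qed.

Lemma left_pyramid_mirror c s H :
  left_pyramid a s (mirror c H) <-> right_pyramid a (c - s) H.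
Proof.
split=> -[pH sH rightH]; split.
- by rewrite -(is_pyramid_mirror c).
- move: sH; rewrite mem_mirror /mirror_piece /=.
  by rewrite (_ : c - (s - a%:Z) - a%:Z = c - s) //; lia.
- move=> x xH; have := rightH (mirror_piece c x); rewrite mem_mirror mirror_pieceK.
  by move=> /(_ xH) /=; lia.
- by rewrite is_pyramid_mirror.
- by rewrite mem_mirror /mirror_piece /= (_ : c - (s - a%:Z) - a%:Z = c - s) //; lia.
- by move=> x; rewrite mem_mirror => /rightH /=; lia.
Qed.

Lemma rest_level_mirror c B s :
  rest_level a (mirror c B) (c - s - a%:Z) = rest_level a B s.
Proof.
suff le_mirror B' s' : (rest_level a (mirror c B') (c - s' - a%:Z) <= rest_level a B' s')%N.
  apply/eqP; rewrite eqn_leq le_mirror /=.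
  have := le_mirror (mirror c B) (c - s - a%:Z).
  by rewrite mirrorK (_ : c - _ - _ = s) //; lia.
apply/rest_level_leP => x; rewrite mem_mirror => xB cxs; apply: (rest_level_gt xB).
by rewrite -(concurrent_mirror c _ (s', 0%N)) mirror_pieceK.
Qed.

Lemma stack_level_mirror c B S y :
  stack_level (mirror c B) (mirror c S) (mirror_piece c y) = stack_level B S y.
Proof.
suff le_mirror B' S' y' : (stack_level (mirror c B') (mirror c S') (mirror_piece c y')
    <= stack_level B' S' y')%N.
  apply/eqP; rewrite eqn_leq le_mirror /=.
  have := le_mirror (mirror c B) (mirror c S) (mirror_piece c y).
  by rewrite !mirrorK mirror_pieceK.
elim: {y'}_.+1 {-2}y' (ltnSn y'.2) => [//|n IHn] x lt_xn.
apply: stack_level_le; first by rewrite rest_level_mirror rest_level_le_stack_level.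
move=> z; rewrite mem_mirror => zS czx lt_zx.
rewrite -[z](mirror_pieceK c); apply: leq_ltn_trans (IHn _ _) _.
  exact: leq_trans lt_zx lt_xn.
by apply: (stack_level_lt B' zS) => //; rewrite -(concurrent_mirror c) mirror_pieceK.
Qed.

Lemma stack_mirror c B S : stack (mirror c B) (mirror c S) = mirror c (stack B S).
Proof.
apply/fsetP => w; rewrite mem_mirror; apply/stackP/stackP => -[y].
  rewrite mem_mirror => yS ->; exists (mirror_piece c y) => //.
  by rewrite -{2}[y](mirror_pieceK c) stack_level_mirror /mirror_piece /=; congr pair; lia.
move=> yS ew; exists (mirror_piece c y); first by rewrite mem_mirror mirror_pieceK.
by rewrite stack_level_mirror -[w](mirror_pieceK c) ew.
Qed.

Lemma hmul_mirror c B S : mirror c (hmul B S) = hmul (mirror c B) (mirror c S).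
Proof. by rewrite /hmul stack_mirror /mirror imfsetU. Qed.

(** * Sequences of pyramids *)

Definition mirror_entry (c : int) (e : config * int) : config * int :=
  (mirror c e.1, c - e.2).

Lemma mirror_entryK c : involutive (mirror_entry c).
Proof. by move=> [P s]; rewrite /mirror_entry /= mirrorK subKr. Qed.

Definition bottom_pos (Q : config) : int :=
  head 0 [seq x.1 | x <- enum_fset (bottom_pieces Q)].

Lemma bottom_posE Q b : pyramid_at Q b -> bottom_pos Q = b.
Proof. by move=> [_ bQ]; rewrite /bottom_pos bQ -fset_seq1. Qed.

Lemma good_seq_gt0 m q : good_seq a m q -> (0 < m)%N.
Proof.
case: q => [|[P s] q] [_ pyr_q <- _ _] //.
have [pP _ _] : right_pyramid a s P by exact: pyr_q 0%N isT.
by rewrite big_cons ltn_addr // is_pyramid_size.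
Qed.

Lemma good_seq1 m P s :
  good_seq a m [:: (P, s)] <-> [/\ right_pyramid a 0 P, s = 0 & #|` P| = m].
Proof.
split=> [[_ pyr_q <- /= s0 _]|[rP s0 <-]].
  by split; rewrite ?big_seq1 //; rewrite -s0; exact: pyr_q 0%N isT.
by split; rewrite ?big_seq1 // => -[|i] //; rewrite s0.
Qed.

Lemma good_seq_cons m q P c : good_seq a m q -> right_pyramid a 0 P ->
  1 <= c <= a%:Z - 1 -> good_seq a (#|` P| + m) ((P, 0) :: map (mirror_entry c) q).
Proof.
move=> [q_gt0 pyr_q <- q0 steps_q] rP c_range; split=> //.
- case=> [|i] //; rewrite /= size_map => lt_iq; rewrite (nth_map dflt) //=.
  have := pyr_q i lt_iq; case: (odd i) => /=.
    by rewrite right_pyramid_mirror subKr.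
  by rewrite left_pyramid_mirror subKr.
- rewrite big_cons big_map; congr addn.
  by apply: eq_bigr => e _; rewrite /hsize card_mirror.
- case=> [|i] /=; rewrite size_map => lt_iq.
    by rewrite (nth_map dflt) //= q0; lia.
  rewrite (nth_map dflt) ?(nth_map dflt) //=; last exact: ltnW.
  by have := steps_q i lt_iq => /=; case: (odd i) => /=; lia.
Qed.

Lemma good_seq_uncons m q : good_seq a m q -> (1 < size q)%N ->
  exists P c q', [/\ q = (P, 0) :: map (mirror_entry c) q', right_pyramid a 0 P,
    1 <= c <= a%:Z - 1 & good_seq a (m - #|` P|) q'].
Proof.
case: q => [|[P s] [|[P2 c] q]] // [_ pyr_q sum_q /= s0 steps_q] _.
exists P, c, (map (mirror_entry c) ((P2, c) :: q)).
have c_range : 1 <= c <= a%:Z - 1 by have := steps_q 0%N isT; rewrite /= s0 subr0.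
rewrite s0 mapK; last exact: mirror_entryK.
split=> //; first by have := pyr_q 0%N isT; rewrite /= s0.
split=> //.
- case=> [|i]; rewrite /= size_map => lt_iq.
    by rewrite /= right_pyramid_mirror subKr; exact: pyr_q 1%N isT.
  rewrite (nth_map dflt) //; have := pyr_q i.+2 lt_iq; rewrite /= negbK.
  case: (odd i) => /=.
    by rewrite right_pyramid_mirror subKr.
  by rewrite left_pyramid_mirror subKr.
- move: sum_q; rewrite big_cons => <-; rewrite addKn big_map.
  by apply: eq_bigr => e _; rewrite /hsize card_mirror.
- by rewrite /= subrr.
- case=> [|i]; rewrite /= size_map => lt_iq.
    by case: q lt_iq {pyr_q sum_q steps_q} (steps_q 1%N) => // e q _ /(_ isT) /=; lia.
  rewrite (nth_map dflt) ?(nth_map dflt) //=; last exact: ltnW.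
  by have := steps_q i.+2 lt_iq => /=; rewrite negbK; case: (odd i) => /=; lia.
Qed.

Lemma hmulr0 B : hmul B fset0 = B.
Proof. by rewrite /hmul stackr0 fsetU0. Qed.

Lemma pyramid0P k p : pyramid0 a k p <-> pyramid_at p 0 /\ #|` p| = k.
Proof. by rewrite pyramid_atP; split=> [[]|[[]]]. Qed.

Lemma pyramid0_gt0 k p : pyramid0 a k p -> (0 < k)%N.
Proof. by move=> [pp _ <-]; exact: is_pyramid_size. Qed.

Lemma right_pyramid0P P :
  right_pyramid a 0 P <-> pyramid_at P 0 /\ forall y, y \in P -> 0 <= y.1.
Proof. by rewrite pyramid_atP; split=> [[]|[[]]]. Qed.

Lemma right_part_right P : right_pyramid a 0 P -> right_part P = P.
Proof.
move=> /right_pyramid0P [pP P_ge0].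
by apply/eqP; rewrite eqEfsubset right_part_sub right_part_max.
Qed.

Lemma rest_pyramid_right P : right_pyramid a 0 P -> rest_pyramid P = fset0.
Proof.
by move=> rP; rewrite /rest_pyramid right_part_right // fsetDv stackr0.
Qed.

Lemma pyramid0_split k p : pyramid0 a k p -> rest_pyramid p != fset0 ->
  exists c, [/\ bottom_pos (rest_pyramid p) + a%:Z = c, 1 <= c <= a%:Z - 1,
    pyramid0 a (k - #|` right_part p|) (mirror c (rest_pyramid p)) &
    (0 < #|` right_part p| < k)%N].
Proof.
move=> /pyramid0P [pp <-] Q_neq0; have [b pQ b_range] := rest_pyramid_at pp Q_neq0.
have Q_gt0 := is_pyramid_size ((pyramid_atP _ _).1 pQ).1.
have [/is_pyramid_size I_gt0 _ _] := right_part_pyramid pp.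
exists (b + a%:Z); rewrite (bottom_posE pQ) (card_right_part_rest pp); split=> //.
- by move: b_range; lia.
- apply/pyramid0P; rewrite card_mirror addKn pyramid_at_mirror.
  by rewrite (_ : b + a%:Z - 0 - a%:Z = b) //; lia.
- by rewrite I_gt0 -{1}(addn0 #|` _|) ltn_add2l.
Qed.

Section Gluing.
Variables (P X : config) (c : int).
Hypotheses (rP : right_pyramid a 0 P) (c_range : 1 <= c <= a%:Z - 1).
Hypothesis pX : pyramid_at X 0.

Let pP : pyramid_at P 0 := proj1 ((right_pyramid0P P).1 rP).
Let P_ge0 : forall y, y \in P -> 0 <= y.1 := proj2 ((right_pyramid0P P).1 rP).

Let pmX : pyramid_at (mirror c X) (c - a%:Z).
Proof. by rewrite pyramid_at_mirror (_ : c - (c - a%:Z) - a%:Z = 0) //; lia. Qed.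

Let b_gt : -(a%:Z) < c - a%:Z. Proof. lia. Qed.
Let b_lt0 : c - a%:Z < 0. Proof. lia. Qed.

Lemma pyramid_at_glue : pyramid_at (hmul P (mirror c X)) 0.
Proof. exact: pyramid_at_hmul pP pmX b_gt b_lt0. Qed.

Lemma right_part_glue : right_part (hmul P (mirror c X)) = P.
Proof. exact: right_part_hmul P_ge0 pmX b_gt b_lt0. Qed.

Lemma rest_pyramid_glue : rest_pyramid (hmul P (mirror c X)) = mirror c X.
Proof. exact: rest_pyramid_hmul P_ge0 pmX b_gt b_lt0. Qed.

Lemma bottom_pos_glue : bottom_pos (mirror c X) + a%:Z = c.
Proof. by rewrite (bottom_posE pmX) subrK. Qed.

End Gluing.

(* [n] is fuel: [decomp n p] is the decomposition of [p] as soon as [#|` p| <= n]. *)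
Fixpoint decomp (n : nat) (p : config) : seq (config * int) :=
  if n is n'.+1 then
    let Q := rest_pyramid p in
    if Q == fset0 then [:: (right_part p, 0)]
    else let c := bottom_pos Q + a%:Z in
      (right_part p, 0) :: map (mirror_entry c) (decomp n' (mirror c Q))
  else [::].

Definition hmul_seq (q : seq (config * int)) : config :=
  foldr (fun e H => hmul e.1 H) fset0 q.

Lemma hmul_seq_mirror c q :
  hmul_seq (map (mirror_entry c) q) = mirror c (hmul_seq q).
Proof. by elim: q => [|e q IHq] /=; rewrite ?mirror0 // IHq hmul_mirror. Qed.

Lemma decomp_good n k p : (k <= n)%N -> pyramid0 a k p -> good_seq a k (decomp n p).
Proof.
elim: n k p => [|n IHn] k p le_kn p0; first by have := pyramid0_gt0 p0; lia.
have [pp card_p] := (pyramid0P _ _).1 p0.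
have rP := right_part_pyramid pp; rewrite /=; case: ifPn => [/eqP Q0|Q_neq0].
  apply/good_seq1; split=> //.
  by rewrite -card_p -{2}(hmul_right_part_rest pp) Q0 hmulr0.
have [c [-> c_range X0 /andP [I_gt0 lt_Ik]]] := pyramid0_split p0 Q_neq0.
rewrite -(subnKC (ltnW lt_Ik)); apply: good_seq_cons => //.
by apply: IHn X0; lia.
Qed.

Lemma hmul_seq_decomp n k p : (k <= n)%N -> pyramid0 a k p -> hmul_seq (decomp n p) = p.
Proof.
elim: n k p => [|n IHn] k p le_kn p0; first by have := pyramid0_gt0 p0; lia.
have pp := ((pyramid0P _ _).1 p0).1; rewrite -{2}(hmul_right_part_rest pp) /=.
case: ifPn => [/eqP -> //|Q_neq0]; rewrite /= ?hmulr0 //.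
have [c [-> c_range X0 /andP [I_gt0 lt_Ik]]] := pyramid0_split p0 Q_neq0.
by rewrite hmul_seq_mirror (IHn _ _ _ X0) ?mirrorK //; lia.
Qed.

Lemma hmul_seq_good n m q : (size q <= n)%N -> good_seq a m q ->
  pyramid0 a m (hmul_seq q).
Proof.
elim: n m q => [|n IHn] m q le_qn gq; first by case: gq; lia.
case: (ltnP 1 (size q)) => [q_gt1|q_le1].
  have [P [c [q' [eq_q rP c_range gq']]]] := good_seq_uncons gq q_gt1; subst q.
  have /pyramid0P [pX card_X] : pyramid0 a (m - #|` P|) (hmul_seq q').
    by apply: IHn gq'; rewrite /= size_map in le_qn.
  apply/pyramid0P; rewrite /= hmul_seq_mirror; split; first exact: pyramid_at_glue.
  rewrite card_hmul ?card_mirror ?card_X; last by case: (wf_mirror c (proj1 pX)).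
  by have := good_seq_gt0 gq'; lia.
case: q q_le1 le_qn gq => [|[P s] [|//]] _ _; first by case.
move=> /good_seq1 [[pP P0 _] -> <-].
by rewrite /= hmulr0.
Qed.

Lemma decomp_hmul_seq n m q : (m <= n)%N -> good_seq a m q ->
  decomp n (hmul_seq q) = q.
Proof.
elim: n m q => [|n IHn] m q le_mn gq; first by have := good_seq_gt0 gq; lia.
case: (ltnP 1 (size q)) => [q_gt1|q_le1].
  have [P [c [q' [-> rP c_range gq']]]] := good_seq_uncons gq q_gt1.
  have /pyramid0P [pX card_X] := hmul_seq_good (leqnn _) gq'.
  set X := hmul_seq q' in pX card_X *.
  rewrite /= hmul_seq_mirror rest_pyramid_glue // right_part_glue //.
  rewrite bottom_pos_glue // mirrorK.
  case: eqP => [X0|_].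
    by move: (card_mirror c X) (good_seq_gt0 gq'); rewrite X0 cardfs0 card_X => <-.
  have [/is_pyramid_size P_gt0 _ _] := rP.
  by rewrite (IHn _ _ _ gq') //; lia.
case: q q_le1 gq => [|[P s] [|//]] _; first by case.
move=> /good_seq1 [rP -> _].
by rewrite /= hmulr0 rest_pyramid_right // eqxx right_part_right.
Qed.

End Heaps.

Lemma bij_between_inverse (X Y : Type) (P : X -> Prop) (Q : Y -> Prop)
    (f : X -> Y) (g : Y -> X) :
  (forall x, P x -> Q (f x)) -> (forall y, Q y -> P (g y)) ->
  (forall x, P x -> g (f x) = x) -> (forall y, Q y -> f (g y) = y) ->
  bij_between P Q.
Proof.
move=> PQf QPg fK gK; exists f; split=> // [x y Px Py efxy|z Qz].
  by rewrite -(fK x Px) efxy fK.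
by exists (g z); rewrite ?gK //; apply: QPg.
Qed.

Theorem lemma4 (a m : nat) : (3 <= a)%N -> (1 <= m)%N ->
  bij_between (pyramid0 a m) (good_seq a m).
Proof.
move=> a_ge3 _; have a_gt0 : (0 < a)%N by lia.
apply: (bij_between_inverse (f := decomp a m) (g := @hmul_seq a)).
- by move=> p; apply: decomp_good.
- by move=> q; apply: hmul_seq_good.
- by move=> p; apply: hmul_seq_decomp.
- by move=> q; apply: decomp_hmul_seq.
Qed.
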